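(* Let $n\ge 2$ and let $\sigma_{n-1}\in G_n$ be the automorphism with $\sigma_{n-1}(y_{n-1}y_n)=-y_{n-1}y_n$ and $\sigma_{n-1}(y_jy_{j+1})=y_jy_{j+1}$ for $1\le j\le n-2$. Then $(\mathrm{EC}_n-1)(\sigma_{n-1}(\mathrm{EC}_n)-1)=(x_n-\mathrm{EC}_{n-1}(x_1,\dots,x_{n-1}))^2$. In particular $\mathrm{EC}_n=1$ implies $x_n=\mathrm{EC}_{n-1}(x_1,\dots,x_{n-1})$.
   Context: Let $x_1,\dots,x_n$ be algebraically independent indeterminates over $\mathbb{Q}$; in an algebraic closure fix $y_j$ with $y_j^2=1-x_j^2$. For indices $i_1<\dots<i_m$, $\mathrm{EC}_m(x_{i_1},\dots,x_{i_m})=\sum_{S\subseteq\{i_1,\dots,i_m\},\ |S|\text{ even}}(-1)^{|S|/2}\prod_{j\in S}y_j\prod_{j\notin S}x_j$, and $\mathrm{EC}_n=\mathrm{EC}_n(x_1,\dots,x_n)$. $G_n$ is the Galois group of $\mathbb{Q}(x_1,\dots,x_n,\ y_iy_j:1\le i<j\le n)$ over $\mathbb{Q}(x_1,\dots,x_n)$. *)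

From HB Require Import structures.
From mathcomp Require Import all_boot all_order all_algebra.
Set Implicit Arguments. Unset Strict Implicit. Unset Printing Implicit Defensive.
Import Order.TTheory GRing.Theory Num.Theory.
Local Open Scope ring_scope.

(* Elements of 'I_m are shifted by one: j : 'I_m stands for index j+1. *)
Definition EC (L : comRingType) (x y : nat -> L) (m : nat) : L :=
  \sum_(S : {set 'I_m} | ~~ odd #|S|)
     (-1) ^+ (#|S| %/ 2) * (\prod_(j in S) y j.+1) * (\prod_(j in ~: S) x j.+1).

(* Write x_j = cos t_j and y_j = sin t_j.  Then EC_m = cos (t_1 + ... + t_m):
   it is the top-left entry of the product of the rotation matrices
   x_j + y_j J, with J ^ 2 = -1, whose expansion over subsets S of the factors
   taking y_j J produces exactly the sign (-1) ^ (|S| / 2) on even S.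
   Let c and d be the cosine and sine of t_1 + ... + t_(n-1).  The hypotheses
   force sigma to multiply y_1, ..., y_(n-1) by a common sign e and y_n by -e,
   so sigma fixes c, maps d to e d, and sends EC_n = c x_n - d y_n to
   c x_n + d y_n.  The claim is then the identity
   (cos (u + v) - 1) (cos (u - v) - 1) = (cos u - cos v) ^ 2. *)

From mathcomp Require Import all_boot all_algebra ring.
Set Implicit Arguments. Unset Strict Implicit. Unset Printing Implicit Defensive.
Import GRing.Theory.
Local Open Scope ring_scope.

Section ImaginaryUnit.
Variables (R : comNzRingType) (A : algType R) (u : A).

Lemma prod_add_scale m (a b : 'I_m -> R) :
  \prod_(i < m) ((a i)%:A + b i *: u) =
  \sum_(S : {set 'I_m}) (\prod_(i in S) b i * \prod_(i in ~: S) a i) *: u ^+ #|S|.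
Proof.
under eq_bigr do rewrite addrC.
rewrite bigA_distr /=; apply: eq_bigr => S _.
rewrite (eq_bigr (fun i => (if i \in S then b i else a i) *: u ^+ (i \in S)));
  last by move=> i _; case: (i \in S); rewrite ?scale1r.
rewrite scaler_prod prodrXr; congr (_ *: u ^+ _).
  rewrite (bigID (mem S)) /=; congr (_ * _); apply: eq_big => i //.
  - by move=> ->.
  - by rewrite inE.
  - by move=> /negbTE ->.
by rewrite -sum1_card [RHS]big_mkcond.
Qed.

Hypothesis u_sqr : u ^+ 2 = -1.

Lemma mul_add_scale a b c d :
  (a%:A + b *: u) * (c%:A + d *: u) = (a * c - b * d)%:A + (a * d + b * c) *: u.
Proof.
rewrite mulrDl !mulrDr -!scalerAl -!scalerAr !mul1r !mulr1 -expr2 u_sqr !scalerA.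
by rewrite scalerN scalerBl scalerDl [RHS]addrACA [- _ + _]addrC.
Qed.

Lemma expr_imag k : u ^+ k = (-1) ^+ k./2 *: u ^+ odd k.
Proof.
rewrite -{1}(odd_double_half k) addnC exprD -mul2n exprM u_sqr.
by rewrite -scaleN1r exprZn expr1n -scalerAl mul1r.
Qed.
End ImaginaryUnit.

Section Rotation.
Variable R : comNzRingType.

Definition imag_mx : 'M[R]_2 := delta_mx 1 0 - delta_mx 0 1.

Lemma imag_mx_sqr : imag_mx ^+ 2 = -1.
Proof.
rewrite expr2 -mulmxE mulmxBl !mulmxBr !mul_delta_mx !mul_delta_mx_0 //.
by apply/matrixP => -[[|[|//]] ?] [[|[|//]] ?]; rewrite !mxE /= !subr0 ?oppr0 ?sub0r.
Qed.

Definition rot (a b : R) : 'M[R]_2 := a%:A + b *: imag_mx.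

Lemma rot00 a b : rot a b 0 0 = a.
Proof. by rewrite !mxE /= subrr mulr0 mulr1 addr0. Qed.

Lemma rot10 a b : rot a b 1 0 = b.
Proof. by rewrite !mxE /= subr0 mulr0 mulr1 add0r. Qed.

Lemma rotM a b c d : rot a b * rot c d = rot (a * c - b * d) (a * d + b * c).
Proof. exact/mul_add_scale/imag_mx_sqr. Qed.

Variables x y : nat -> R.

Definition rot_prod m := \prod_(j < m) rot (x j.+1) (y j.+1).

Definition cos_sum m := rot_prod m 0 0.
Definition sin_sum m := rot_prod m 1 0.

Lemma rot_prodE m : rot_prod m = rot (cos_sum m) (sin_sum m).
Proof.
have rotE M a b : M = rot a b -> M = rot (M 0 0) (M 1 0).
  by move=> ->; rewrite rot00 rot10.
rewrite /cos_sum /sin_sum; elim: m => [|m IHm].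
  by apply: (rotE _ 1 0); rewrite /rot_prod big_ord0 /rot scale0r addr0 scale1r.
by apply: rotE; rewrite /rot_prod big_ord_recr /= -/(rot_prod m) IHm rotM.
Qed.

Lemma cos_sum0 : cos_sum 0 = 1.
Proof. by rewrite /cos_sum /rot_prod big_ord0 mxE. Qed.

Lemma sin_sum0 : sin_sum 0 = 0.
Proof. by rewrite /sin_sum /rot_prod big_ord0 mxE. Qed.

Lemma rot_prodS m : rot_prod m.+1 =
  rot (cos_sum m * x m.+1 - sin_sum m * y m.+1) (cos_sum m * y m.+1 + sin_sum m * x m.+1).
Proof. by rewrite /rot_prod big_ord_recr /= -/(rot_prod m) rot_prodE rotM. Qed.

Lemma cos_sumS m : cos_sum m.+1 = cos_sum m * x m.+1 - sin_sum m * y m.+1.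
Proof. by rewrite {1}/cos_sum rot_prodS rot00. Qed.

Lemma sin_sumS m : sin_sum m.+1 = cos_sum m * y m.+1 + sin_sum m * x m.+1.
Proof. by rewrite {1}/sin_sum rot_prodS rot10. Qed.

Lemma EC_cos_sum m : EC x y m = cos_sum m.
Proof.
rewrite /cos_sum /rot_prod /rot.
rewrite (prod_add_scale _ (fun i : 'I_m => x i.+1) (fun i => y i.+1)) summxE.
rewrite /EC big_mkcond /=; apply: eq_bigr => S _.
rewrite mxE (expr_imag imag_mx_sqr) mxE divn2.
case: (odd #|S|); last by rewrite /= mxE mulr1 [RHS]mulrC mulrA.
by rewrite /= expr1 !mxE /= subrr !mulr0.
Qed.

Lemma cos_sum_sqr_add m :
  (forall i, (1 <= i <= m)%N -> x i ^+ 2 + y i ^+ 2 = 1) ->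
  cos_sum m ^+ 2 + sin_sum m ^+ 2 = 1.
Proof.
elim: m => [|m IHm] hxy; first by rewrite cos_sum0 sin_sum0 expr1n expr0n addr0.
have -> : cos_sum m.+1 ^+ 2 + sin_sum m.+1 ^+ 2 =
    (cos_sum m ^+ 2 + sin_sum m ^+ 2) * (x m.+1 ^+ 2 + y m.+1 ^+ 2).
  by rewrite cos_sumS sin_sumS; ring.
rewrite IHm ?hxy ?mulr1 //= => i /andP[i_gt0 i_le_m].
by rewrite hxy // i_gt0 leqW.
Qed.

End Rotation.

(* With (a, b) = (cos u, sin u) and (c, d) = (cos v, sin v) this reads
   (cos (u + v) - 1) (cos (u - v) - 1) = (cos u - cos v) ^ 2. *)
Lemma cos_addM_cos_sub_sub1 (R : comNzRingType) (a b c d : R) :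
  a ^+ 2 + b ^+ 2 = 1 -> c ^+ 2 + d ^+ 2 = 1 ->
  (c * a - d * b - 1) * (c * a + d * b - 1) = (a - c) ^+ 2.
Proof.
move=> hab hcd.
have -> : (c * a - d * b - 1) * (c * a + d * b - 1) =
    (c * a - 1) ^+ 2 - d ^+ 2 * b ^+ 2 by ring.
have hb : b ^+ 2 = 1 - a ^+ 2 by rewrite -hab addrC addKr.
have hd : d ^+ 2 = 1 - c ^+ 2 by rewrite -hcd addrC addKr.
by rewrite hb hd; ring.
Qed.

Section FieldMorphism.
Variables (F : fieldType) (s : {rmorphism F -> F}).

Lemma rmorph_ratio_sqr a : a != 0 -> s (a ^+ 2) = a ^+ 2 -> (s a / a) ^+ 2 = 1.
Proof. by move=> a0 sa2; rewrite expr_div_n -rmorphXn sa2 divff // expf_neq0. Qed.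

Lemma rmorph_ratio_next a b c e : a != 0 -> e ^+ 2 = 1 ->
  s a = e * a -> s (a * b) = c * (a * b) -> s b = c * e * b.
Proof.
move=> a0 e2 sa sab; have e0 : e != 0 by rewrite -(sqrf_eq0 e) e2 oner_eq0.
apply: (mulfI (mulf_neq0 e0 a0)); rewrite -{1}sa -rmorphM sab.
by rewrite -[LHS]mulr1 -e2; ring.
Qed.

Lemma rmorph_ratio_chain (y : nat -> F) m :
  (forall j, (1 <= j <= m.+1)%N -> y j != 0) -> s (y 1 ^+ 2) = y 1 ^+ 2 ->
  (forall j, (1 <= j <= m)%N -> s (y j * y j.+1) = y j * y j.+1) ->
  forall j, (1 <= j <= m.+1)%N -> s (y j) = s (y 1) / y 1 * y j.
Proof.
move=> y0 sy1 syy; have e2 := rmorph_ratio_sqr (y0 1%N isT) sy1.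
elim=> [|[|j] IHj] // hj; first by rewrite divfK ?y0.
have j_lt_m : (j.+1 <= m)%N := hj.
rewrite -[_ / _]mul1r; apply: (rmorph_ratio_next (y0 j.+1 _) e2).
- by rewrite /= leqW.
- by rewrite IHj //= leqW.
- by rewrite syy ?mul1r.
Qed.

Lemma rmorph_cos_sin_sum (x y : nat -> F) e m : e ^+ 2 = 1 ->
  (forall j, (1 <= j <= m)%N -> s (x j) = x j) ->
  (forall j, (1 <= j <= m)%N -> s (y j) = e * y j) ->
  s (cos_sum x y m) = cos_sum x y m /\ s (sin_sum x y m) = e * sin_sum x y m.
Proof.
move=> e2; elim: m => [|m IHm] sx sy; first by rewrite cos_sum0 sin_sum0 rmorph0 rmorph1 mulr0.
have sub_m j : (1 <= j <= m)%N -> (1 <= j <= m.+1)%N by case/andP=> -> /leqW.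
have [sc ss] := IHm (fun j hj => sx j (sub_m j hj)) (fun j hj => sy j (sub_m j hj)).
have m_le : (1 <= m.+1 <= m.+1)%N by rewrite leqnn.
rewrite cos_sumS sin_sumS rmorphB rmorphD !rmorphM sc ss sx // sy //.
by split; [rewrite mulrACA -expr2 e2 mul1r | rewrite mulrCA -[e * _ * _]mulrA -mulrDr].
Qed.

Lemma rmorph_cos_sumS_flip (x y : nat -> F) e m : e ^+ 2 = 1 ->
  s (cos_sum x y m) = cos_sum x y m -> s (sin_sum x y m) = e * sin_sum x y m ->
  s (x m.+1) = x m.+1 -> s (y m.+1) = - e * y m.+1 ->
  s (cos_sum x y m.+1) = cos_sum x y m * x m.+1 + sin_sum x y m * y m.+1.
Proof.
move=> e2 sc ss sx sy; rewrite cos_sumS rmorphB !rmorphM sc ss sx sy.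
by rewrite mulrACA mulrN -expr2 e2 mulN1r opprK.
Qed.

End FieldMorphism.

Unset Implicit Arguments.
Theorem mainTheorem7 (L : fieldType) (n : nat) (x y : nat -> L)
    (sigma : {rmorphism L -> L}) :
  (2 <= n)%N ->
  (forall i, (1 <= i <= n)%N -> y i ^+ 2 = 1 - x i ^+ 2) ->
  (* genericity: consequence of algebraic independence of the x_i *)
  (forall i, (1 <= i <= n)%N -> x i ^+ 2 != 1) ->
  (* sigma fixes Q(x_1,...,x_n) *)
  (forall i, (1 <= i <= n)%N -> sigma (x i) = x i) ->
  sigma (y n.-1 * y n) = - (y n.-1 * y n) ->
  (forall j, (1 <= j <= n - 2)%N -> sigma (y j * y j.+1) = y j * y j.+1) ->
  (EC x y n - 1) * (sigma (EC x y n) - 1) = (x n - EC x y n.-1) ^+ 2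
  /\ (EC x y n = 1 -> x n = EC x y n.-1).
Proof.
case: n => [|[|k]] //= _ hy hx2 sx sy_last sy_pair.
have le_k2 j : (1 <= j <= k.+1)%N -> (1 <= j <= k.+2)%N.
  by case/andP=> -> /leqW.
have hxy i : (1 <= i <= k.+2)%N -> x i ^+ 2 + y i ^+ 2 = 1.
  by move=> hi; rewrite hy // addrC subrK.
have y0 i : (1 <= i <= k.+2)%N -> y i != 0.
  by move=> hi; rewrite -sqrf_eq0 hy // subr_eq0 eq_sym hx2.
have sy1 : sigma (y 1 ^+ 2) = y 1 ^+ 2 by rewrite hy // rmorphB rmorph1 rmorphXn sx.
have e2 := rmorph_ratio_sqr (y0 1%N isT) sy1; set e := _ / _ in e2.
have sy : forall j, (1 <= j <= k.+1)%N -> sigma (y j) = e * y j.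
  apply: rmorph_ratio_chain => // [j /le_k2/y0 //|j /andP[j_gt0 j_le]].
  by rewrite sy_pair // j_gt0 subn2.
have sy_n : sigma (y k.+2) = - e * y k.+2.
  rewrite -mulN1r; apply: (rmorph_ratio_next (y0 k.+1 _) e2).
  - by rewrite leqnSn.
  - by rewrite sy // leqnn.
  - by rewrite sy_last mulN1r.
have [sc ss] := rmorph_cos_sin_sum e2 (fun j hj => sx j (le_k2 j hj)) sy.
have key : (EC x y k.+2 - 1) * (sigma (EC x y k.+2) - 1) = (x k.+2 - EC x y k.+1) ^+ 2.
  rewrite !EC_cos_sum (rmorph_cos_sumS_flip e2) ?sx ?leqnn // (cos_sumS x y k.+1).
  rewrite cos_addM_cos_sub_sub1 ?hxy ?leqnn //.
  by apply: cos_sum_sqr_add => i /le_k2/hxy.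
split=> // EC1; apply/eqP.
by rewrite -subr_eq0 -sqrf_eq0 -key EC1 subrr mul0r.
Qed.
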